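(* Every finite monoid is sofic.
   Context: For a non-empty finite set $X$, $\mathrm{Map}(X)$ is the monoid of all maps $X\to X$ under composition (identity $\mathrm{Id}_X$) with the Hamming metric $d_X(f,g)=|\{x\in X : f(x)\ne g(x)\}|/|X|$. For a monoid $M$ with identity $1_M$, finite $K\subset M$ and $\varepsilon,\alpha>0$, a map $\varphi\colon M\to\mathrm{Map}(X)$ is a $(K,\varepsilon)$-morphism if $d_X(\varphi(k_1k_2),\varphi(k_1)\varphi(k_2))\le\varepsilon$ for all $k_1,k_2\in K$ and $d_X(\varphi(1_M),\mathrm{Id}_X)\le\varepsilon$; it is $(K,\alpha)$-injective if $d_X(\varphi(k_1),\varphi(k_2))\ge\alpha$ for all distinct $k_1,k_2\in K$. $M$ is sofic if for every finite $K\subset M$ and every $\varepsilon>0$ there exist a non-empty finite set $X$ and a $(K,1-\varepsilon)$-injective $(K,\varepsilon)$-morphism $\varphi\colon M\to\mathrm{Map}(X)$. *)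

From Stdlib Require List.
From mathcomp Require Import all_boot all_order all_algebra.
Set Implicit Arguments. Unset Strict Implicit. Unset Printing Implicit Defensive.
Import Order.TTheory GRing.Theory Num.Theory.
Local Open Scope ring_scope.

Record monoid := Monoid {
  mcarrier :> Type;
  mmul : mcarrier -> mcarrier -> mcarrier;
  mone : mcarrier;
  mmulA : forall a b c, mmul a (mmul b c) = mmul (mmul a b) c;
  mmul1m : forall a, mmul mone a = a;
  mmulm1 : forall a, mmul a mone = a }.

Definition finite_monoid (M : monoid) : Prop :=
  exists s : seq M, forall x : M, List.In x s.

Definition mapcomp (X : finType) (f g : X -> X) : X -> X := fun x => f (g x).

Definition hamming (R : numFieldType) (X : finType) (f g : X -> X) : R :=
  (#|[pred x | f x != g x]|%:R) / (#|X|%:R).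

Definition Keps_morphism (R : numFieldType) (M : monoid) (X : finType)
    (K : seq M) (eps : R) (phi : M -> X -> X) : Prop :=
  (forall k1 k2, List.In k1 K -> List.In k2 K ->
     hamming R (phi (mmul k1 k2)) (mapcomp (phi k1) (phi k2)) <= eps) /\
  hamming R (phi (mone M)) id <= eps.

Definition Kalpha_injective (R : numFieldType) (M : monoid) (X : finType)
    (K : seq M) (alpha : R) (phi : M -> X -> X) : Prop :=
  forall k1 k2, List.In k1 K -> List.In k2 K -> k1 <> k2 ->
     alpha <= hamming R (phi k1) (phi k2).

Definition sofic (R : numFieldType) (M : monoid) : Prop :=
  forall (K : seq M) (eps : R), 0 < eps ->
    exists (X : finType) (phi : M -> X -> X),
      (0 < #|X|)%N /\ Kalpha_injective K (1 - eps) phi /\ Keps_morphism K eps phi.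

From mathcomp Require Import all_boot all_order all_algebra.
From mathcomp Require Import reals.
From Stdlib Require Import ClassicalEpsilon.
Set Implicit Arguments. Unset Strict Implicit. Unset Printing Implicit Defensive.
Import Order.TTheory GRing.Theory Num.Theory.
Local Open Scope ring_scope.

(* The left regular action of M on itself is an exact morphism into Map(M), and
   two distinct elements already act differently on the identity, so their images
   are at Hamming distance at least 1/|M|.  Letting M act diagonally on M^N keeps
   the morphism exact while raising the proportion of points where two actions
   agree to its N-th power, which tends to 0. *)

Lemma bernoulli_ler (R : numDomainType) (x : R) (n : nat) :
  0 <= x -> 1 + x *+ n <= (1 + x) ^+ n.
Proof.
move=> x_ge0; elim: n => [|n IHn]; first by rewrite mulr0n addr0 expr0.
rewrite exprSr mulrSr addrA.
apply: le_trans (_ : (1 + x *+ n) * (1 + x) <= _); last first.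
  by rewrite ler_wpM2r // addr_ge0.
rewrite mulrDr mulr1 lerD2l -[X in X <= _]mul1r ler_wpM2r //.
by rewrite lerDl mulrn_wge0.
Qed.

Lemma exists_expr_le (R : archiRealFieldType) (x eps : R) :
  0 <= x -> x < 1 -> 0 < eps -> exists N : nat, x ^+ N <= eps.
Proof.
rewrite le_eqVlt => /predU1P[<- _ eps_gt0|x_gt0 x_lt1 eps_gt0].
  by exists 1%N; rewrite expr1 ltW.
pose t := x^-1 - 1.
have t_gt0 : 0 < t by rewrite subr_gt0 invf_gt1.
have [N N_gt] : exists N : nat, eps^-1 / t < N%:R.
  by exists (Num.bound (eps^-1 / t)); rewrite archi_boundP // divr_ge0 // ltW ?invr_gt0.
exists N.
have := bernoulli_ler N (ltW t_gt0); rewrite [1 + t]addrC subrK exprVn => bern.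
have : eps^-1 < x ^- N.
  by rewrite (lt_le_trans _ bern) // ltr_wpDl // -mulr_natr mulrC -ltr_pdivrMr.
by rewrite ltf_pV2 ?posrE ?exprn_gt0 // => /ltW.
Qed.

Section Hamming.
Variables (R : numFieldType) (X : finType).
Implicit Types f g : X -> X.

Lemma hamming_eq0 f g : f =1 g -> hamming R f g = 0.
Proof.
move=> fg; rewrite /hamming (eq_card0 (_ : _ =i pred0)) ?mul0r //.
by move=> x; rewrite inE fg eqxx.
Qed.

Lemma hammingE f g : (0 < #|X|)%N ->
  hamming R f g = 1 - #|[pred x | f x == g x]|%:R / #|X|%:R.
Proof.
move=> X_gt0; have X_neq0 : #|X|%:R != 0 :> R by rewrite pnatr_eq0 -lt0n.
rewrite /hamming -[X in X - _](divff X_neq0) -mulrBl -natrB ?max_card //.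
congr (_%:R / _); rewrite -(cardC [pred x | f x == g x]) addKn.
by apply: eq_card => x; rewrite !inE.
Qed.

Lemma hamming_le1 f g : hamming R f g <= 1.
Proof.
have [X0|X_gt0] := posnP #|X|; first by rewrite /hamming X0 invr0 mulr0 ler01.
by rewrite hammingE // lerBlDr lerDl divr_ge0.
Qed.

Lemma hamming_ge_inv f g x : f x != g x -> #|X|%:R^-1 <= hamming R f g.
Proof.
move=> fgx; rewrite /hamming -[X in X <= _]mul1r ler_wpM2r ?invr_ge0 // ler1n.
by apply/card_gt0P; exists x.
Qed.

End Hamming.

Section DiagonalMap.
Variables (X : finType) (N : nat).
Implicit Types f g : X -> X.

Definition diag_map f : {ffun 'I_N -> X} -> {ffun 'I_N -> X} :=
  fun u => [ffun i => f (u i)].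

Lemma eq_diag_map f g : f =1 g -> diag_map f =1 diag_map g.
Proof. by move=> fg u; apply/ffunP => i; rewrite !ffunE fg. Qed.

Lemma diag_map_id : diag_map id =1 id.
Proof. by move=> u; apply/ffunP => i; rewrite ffunE. Qed.

Lemma diag_map_comp f g :
  diag_map (mapcomp f g) =1 mapcomp (diag_map f) (diag_map g).
Proof. by move=> u; apply/ffunP => i; rewrite !ffunE. Qed.

Lemma card_diag_map_agree f g :
  #|[pred u | diag_map f u == diag_map g u]| = (#|[pred x | f x == g x]| ^ N)%N.
Proof.
rewrite -[in RHS](card_ord N) -card_ffun_on; apply: eq_card => u; rewrite !inE.
apply/eqP/ffun_onP => [fgu i | fgu].
  by move/ffunP/(_ i): fgu; rewrite !ffunE inE => ->.
by apply/ffunP => i; rewrite !ffunE; apply/eqP/fgu.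
Qed.

Lemma hamming_diag_map (R : numFieldType) f g : (0 < #|X|)%N ->
  hamming R (diag_map f) (diag_map g) = 1 - (1 - hamming R f g) ^+ N.
Proof.
move=> X_gt0; have XN_gt0 : (0 < #|{ffun 'I_N -> X}|)%N.
  by rewrite card_ffun expn_gt0 X_gt0.
rewrite !hammingE // subKr card_diag_map_agree card_ffun card_ord.
by rewrite expr_div_n !natrX.
Qed.

End DiagonalMap.

Arguments diag_map {X} N f.

Lemma In_nth_index (A : Type) (x0 x : A) (s : seq A) :
  List.In x s -> exists2 i, (i < size s)%N & nth x0 s i = x.
Proof.
elim: s => [|y s IHs] //= [->|/IHs[i i_lt <-]]; first by exists 0%N.
by exists i.+1.
Qed.

(* The enumeration may contain repetitions, so [T] keeps only the positions that
   are the chosen index of their entry. *)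
Lemma finite_enum_bij (A : Type) (x0 : A) (s : seq A) :
  (forall x, List.In x s) ->
  exists (T : finType) (e : T -> A) (r : A -> T), cancel e r /\ cancel r e.
Proof.
move=> s_all; pose e0 (i : 'I_(size s)) := nth x0 s i.
have r0P x : {i : 'I_(size s) | e0 i = x}.
  apply: constructive_indefinite_description.
  by have [i i_lt <-] := In_nth_index x0 (s_all x); exists (Ordinal i_lt).
pose r0 x := sval (r0P x).
have e0K x : e0 (r0 x) = x := svalP (r0P x).
pose T := {i : 'I_(size s) | r0 (e0 i) == i}.
have rP x : r0 (e0 (r0 x)) == r0 x by rewrite e0K.
exists T; exists (fun t : T => e0 (val t)).
exists (fun x => exist _ (r0 x) (rP x)); split => [t|x] /=; last exact: e0K.
by apply: val_inj; apply/eqP; exact: valP t.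
Qed.

Section RegularAction.
Variables (M : monoid) (T : finType) (e : T -> M) (r : M -> T).
Hypotheses (eK : cancel e r) (rK : cancel r e).

Definition regular_act (k : M) (t : T) : T := r (mmul k (e t)).

Lemma regular_actM k1 k2 :
  regular_act (mmul k1 k2) =1 mapcomp (regular_act k1) (regular_act k2).
Proof. by move=> t; rewrite /regular_act /mapcomp rK mmulA. Qed.

Lemma regular_act1 : regular_act (mone M) =1 id.
Proof. by move=> t; rewrite /regular_act mmul1m eK. Qed.

Lemma regular_act_neq k1 k2 :
  k1 <> k2 -> regular_act k1 (r (mone M)) != regular_act k2 (r (mone M)).
Proof.
by move=> k12; apply/eqP => /(can_inj rK); rewrite !rK !mmulm1.
Qed.

End RegularAction.

Theorem proposition4p1 (R : realType) (M : monoid) :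
  finite_monoid M -> sofic R M.
Proof.
move=> [s s_all] K eps eps_gt0.
have [T [e [r [eK rK]]]] := finite_enum_bij (mone M) s_all.
have T_gt0 : (0 < #|T|)%N by apply/card_gt0P; exists (r (mone M)).
have q_ge0 : 0 <= 1 - #|T|%:R^-1 :> R by rewrite subr_ge0 invf_le1 ?ler1n ?ltr0n.
have [N decay] : exists N, (1 - #|T|%:R^-1) ^+ N <= eps.
  by apply: exists_expr_le; rewrite // gtrBl invr_gt0 ltr0n.
pose phi k := diag_map N (regular_act e r k).
exists {ffun 'I_N -> T}, phi; split; [|split].
- by rewrite card_ffun card_ord expn_gt0 T_gt0.
- move=> k1 k2 _ _ k12; rewrite hamming_diag_map // lerB //.
  apply: le_trans decay; apply: lerXn2r; rewrite ?nnegrE //.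
    by rewrite subr_ge0 hamming_le1.
  exact: lerB (lexx 1) (hamming_ge_inv R (regular_act_neq rK k12)).
- split => [k1 k2 _ _|]; rewrite hamming_eq0 ?ltW // => u.
    by rewrite /phi -diag_map_comp; apply: eq_diag_map; exact: regular_actM.
  by rewrite /phi (eq_diag_map (regular_act1 eK)) diag_map_id.
Qed.
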